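(* Let $r\ge 3$ and $0<l<r-1$, and let $d_1,\dots,d_{l-1},d_{l+2},\dots,d_{r-1}\in\{0,1\}$. Then \[ C^{(d_1,\dots,d_{l-1},0,1,d_{l+2},\dots,d_{r-1})}=C^{(d_1,\dots,d_{l-1})}\cdot C^{(1,d_{l+2},\dots,d_{r-1})}. \] Here the left side is a coefficient attached to $\mathbb Z_{\ge0}^r$ (with $r-1$ indices), the first factor to $\mathbb Z_{\ge0}^{l}$ (with $l-1$ indices) and the second to $\mathbb Z_{\ge0}^{r-l}$ (with $r-l-1$ indices).
   Context: Bernoulli numbers $B_n$ are defined by $\sum_{n\ge0}B_n x^n/n! = xe^x/(e^x-1)$ (so $B_1=+1/2$). For $r\ge1$ and a finite set $S\subset\mathbb Z_{\ge0}^r$, put $C(S)=(-1)^r\sum_{(n_1,\dots,n_r)\in S}\prod_{j=1}^r \frac{B_{n_j}}{n_j!}$. For $r\ge1$, $1\le j\le r-1$ define $S^{(0)}_{j,r}=\{(n_1,\dots,n_r)\in\mathbb Z_{\ge0}^r: n_1+\dots+n_r=r,\ n_{j+1}+\dots+n_r\le r-j\}$ and $S^{(1)}_{j,r}=\{(n_1,\dots,n_r)\in\mathbb Z_{\ge0}^r: n_1+\dots+n_r=r,\ n_1+\dots+n_j<j\}$. For $d_1,\dots,d_{r-1}\in\{0,1\}$ let $S^{(d_1,\dots,d_{r-1})}=\bigcap_{j=1}^{r-1}S^{(d_j)}_{j,r}$ (for $r=1$ this is $S^{()}=\{(1)\}\subset\mathbb Z_{\ge0}^1$), and $C^{(d_1,\dots,d_{r-1})}=C(S^{(d_1,\dots,d_{r-1})})$.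 In particular $C^{()}=-1/2$. *)

From mathcomp Require Import all_boot all_order all_algebra.
Set Implicit Arguments. Unset Strict Implicit. Unset Printing Implicit Defensive.
Import Order.TTheory GRing.Theory Num.Theory.
Local Open Scope ring_scope.

(* Bernoulli numbers with B_1 = +1/2, i.e. sum_n B_n x^n/n! = x e^x/(e^x-1).
   Comparing coefficients of x^(m+1)/(m+1)! in
   (e^x - 1) * (sum B_n x^n/n!) = x e^x gives
   sum_{k=0}^{m} 'C(m+1,k) B_k = m+1, i.e.
   B_m = 1 - (m+1)^-1 * sum_{k<m} 'C(m+1,k) B_k.
   bern_seq m is the list [B_0; ...; B_(m-1)]. *)
Fixpoint bern_seq (m : nat) : seq rat :=
  match m with
  | 0%N => [::]
  | m'.+1 => let s := bern_seq m' in
      rcons s (1 - (m'.+1%:R)^-1 * \sum_(k < m') ('C(m'.+1, k))%:R * s`_k)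
  end.

Definition bern (n : nat) : rat := (bern_seq n.+1)`_n.

(* Tuples (n_1,...,n_r) in Z_{>=0}^r with n_1+...+n_r = r have all entries
   <= r, so they are represented faithfully by t : {ffun 'I_r -> 'I_r.+1}
   (0-based index i corresponds to n_(i+1)). *)
Definition tup (r : nat) := {ffun 'I_r -> 'I_r.+1}.

Definition total_r (r : nat) (t : tup r) : bool :=
  (\sum_(i < r) (t i : nat))%N == r.

Definition Ccoef (r : nat) (S : pred (tup r)) : rat :=
  (-1) ^+ r * \sum_(t : tup r | S t) \prod_(j < r) (bern (t j) / ((t j)`!)%:R).

Definition S0 (r j : nat) (t : tup r) : bool :=
  total_r t && ((\sum_(i < r | (j <= i)%N) (t i : nat)) <= r - j)%N.
Definition S1 (r j : nat) (t : tup r) : bool :=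
  total_r t && ((\sum_(i < r | (i < j)%N) (t i : nat)) < j)%N.
Definition Sdj (d : bool) (r j : nat) (t : tup r) : bool :=
  if d then S1 j t else S0 j t.

(* For d = [:: d_1; ...; d_(r-1)], r := size d + 1,
   S^(d) = intersection over 1 <= j <= r-1 of S^(d_j)_{j,r}
   (for r = 1 this is the set of tuples of total 1, i.e. {(1)}). *)
Definition Sd (d : seq bool) (t : tup (size d).+1) : bool :=
  total_r t &&
  [forall j : 'I_(size d).+1, (0 < j)%N ==> Sdj (nth false d j.-1) j t].

Definition Cd (d : seq bool) : rat := Ccoef (@Sd d).

From mathcomp Require Import all_boot all_order all_algebra.
From mathcomp Require Import zify.
Import GRing.Theory.
Set Implicit Arguments. Unset Strict Implicit. Unset Printing Implicit Defensive.

(* A tuple (n_1, ..., n_r) is handled through the list of its entries, and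
   membership in S^(d) becomes a condition on the prefix sums
   p_j = n_1 + ... + n_j: p_r = r, p_j < j when d_j = 1 and p_j >= j when
   d_j = 0.  The pattern d_l = 0, d_(l+1) = 1 forces l <= p_l <= p_(l+1) < l+1,
   i.e. p_l = l.  Then the first l entries form a tuple of S^(d_1..d_(l-1)) and,
   after shifting the later prefix sums by l, the last r - l entries form a
   tuple of S^(1,d_(l+2)..d_(r-1)); conversely any two such tuples concatenate
   to a tuple of S^(d).  So S^(d) is a product set, over which both the sign
   (-1)^r and the summand prod_j B_(n_j)/n_j! factor. *)

Lemma sumn_take (s : seq nat) k :
  sumn (take k s) = \sum_(0 <= i < size s | i < k) nth 0 s i.
Proof.
rewrite big_mkcond; elim: s k => [|x s IHs] [|k] /=; rewrite ?big_nil //.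
- by rewrite big1 // => i _; rewrite ltn0.
- by rewrite big_nat_recl // IHs.
Qed.

Lemma leq_sumn (s : seq nat) x : x \in s -> x <= sumn s.
Proof.
elim: s => //= y s IHs; rewrite inE => /predU1P [-> | /IHs]; first exact: leq_addr.
by move/leq_trans; apply; apply: leq_addl.
Qed.

Lemma leq_sumn_take m n (s : seq nat) : m <= n -> sumn (take m s) <= sumn (take n s).
Proof. by move=> le_mn; rewrite -(subnKC le_mn) takeD sumn_cat leq_addr. Qed.

Section TupleSeq.

Variable r : nat.

Definition tseq (t : tup r) : seq nat := [seq val (t i) | i <- enum 'I_r].

Definition seq_tup (s : seq nat) : tup r := [ffun i : 'I_r => inord (nth 0 s i)].

Lemma size_tseq (t : tup r) : size (tseq t) = r.
Proof. by rewrite size_map size_enum_ord. Qed.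

Lemma nth_tseq (t : tup r) (i : 'I_r) : nth 0 (tseq t) i = t i.
Proof. by rewrite (nth_map i) ?size_enum_ord // nth_ord_enum. Qed.

Lemma tseq_le (t : tup r) x : x \in tseq t -> x <= r.
Proof. by case/mapP => i _ ->; apply: leq_ord. Qed.

Lemma tseqK : cancel tseq seq_tup.
Proof. by move=> t; apply/ffunP => i; rewrite ffunE nth_tseq inord_val. Qed.

Lemma seq_tupK (s : seq nat) :
  size s = r -> {in s, forall x, x <= r} -> tseq (seq_tup s) = s.
Proof.
move=> sz_s le_s; apply: (@eq_from_nth _ 0); rewrite size_tseq // => i lt_ir.
rewrite -[i]/(val (Ordinal lt_ir)) nth_tseq ffunE inordK // ltnS.
by apply: le_s; rewrite mem_nth ?sz_s.
Qed.

Lemma sum_tup_prefix (t : tup r) k :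
  \sum_(i < r | i < k) (t i : nat) = sumn (take k (tseq t)).
Proof.
rewrite sumn_take size_tseq big_mkord.
by apply: eq_bigr => i _; rewrite nth_tseq.
Qed.

Lemma sum_tup (t : tup r) : \sum_(i < r) (t i : nat) = sumn (tseq t).
Proof.
rewrite -[tseq t]take_size -sum_tup_prefix size_tseq.
by apply: eq_bigl => i; rewrite ltn_ord.
Qed.

Lemma prod_tup (R : comPzSemiRingType) (F : nat -> R) (t : tup r) :
  (\prod_(i < r) F (t i) = \prod_(x <- tseq t) F x)%R.
Proof. by rewrite big_map big_enum. Qed.

End TupleSeq.

(* Given n_1 + ... + n_r = r, the condition n_(j+1) + ... + n_r <= r - j of
   S^(0)_(j,r) says n_1 + ... + n_j >= j. *)
Definition prefix_ok (dj : bool) (x j : nat) : bool :=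
  if dj then x < j else j <= x.

Definition Sd_seq (d : seq bool) (s : seq nat) : bool :=
  (sumn s == (size d).+1) &&
  all (fun j => prefix_ok (nth false d j.-1) (sumn (take j s)) j) (iota 1 (size d)).

Lemma Sdj_tseq dj r j (t : tup r) : j <= r ->
  Sdj dj j t = total_r t && prefix_ok dj (sumn (take j (tseq t))) j.
Proof.
move=> le_jr; case: dj; rewrite /Sdj /S1 /S0 ?sum_tup_prefix //.
case tot: (total_r t) => //=; move: tot.
rewrite /total_r (bigID (fun i : 'I_r => i < j)) /= sum_tup_prefix.
by rewrite (eq_bigl (fun i : 'I_r => j <= i)) => [/eqP|i]; [lia | rewrite -leqNgt].
Qed.

Lemma Sd_tseq d (t : tup (size d).+1) : Sd t = Sd_seq d (tseq t).
Proof.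
rewrite /Sd /Sd_seq /total_r sum_tup; case: eqP => //= tot.
have total_t : total_r t by rewrite /total_r sum_tup tot.
apply/forallP/allP => [H j | H j].
  rewrite mem_iota add1n ltnS => /andP [j_gt0 le_jd].
  have := H (@Ordinal (size d).+1 j le_jd).
  by rewrite /= j_gt0 Sdj_tseq ?total_t // ltnW.
apply/implyP => j_gt0; rewrite Sdj_tseq ?total_t; last exact: ltnW.
by apply: H; rewrite mem_iota j_gt0 add1n ltn_ord.
Qed.

Section TupleSplit.

Variables (R : nmodType) (m n r : nat) (P1 P2 P : pred (seq nat)) (F : seq nat -> R).
Hypothesis mnr : m + n = r.
Hypothesis P_cat :
  forall s1 s2, size s1 = m -> size s2 = n -> P (s1 ++ s2) = P1 s1 && P2 s2.
Hypotheses (P1_sumn : forall s, P1 s -> sumn s <= m)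
           (P2_sumn : forall s, P2 s -> sumn s <= n).

Lemma sum_tup_cat :
  (\sum_(t : tup r | P (tseq t)) F (tseq t) =
   \sum_(p : tup m * tup n | P1 (tseq p.1) && P2 (tseq p.2)) F (tseq p.1 ++ tseq p.2))%R.
Proof.
pose join (p : tup m * tup n) : tup r := seq_tup r (tseq p.1 ++ tseq p.2).
pose cut (t : tup r) := (seq_tup m (take m (tseq t)), seq_tup n (drop m (tseq t))).
have tseq_join p : tseq (join p) = tseq p.1 ++ tseq p.2.
  apply: seq_tupK => [|x]; first by rewrite size_cat !size_tseq.
  by rewrite mem_cat => /orP [] /tseq_le; lia.
have joinK : cancel join cut.
  by case=> p1 p2; rewrite /cut tseq_join take_size_cat ?drop_size_cat ?size_tseq // !tseqK.
have cutK t : P (tseq t) -> join (cut t) = t.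
  have sz_take : size (take m (tseq t)) = m by rewrite size_takel // size_tseq -mnr leq_addr.
  have sz_drop : size (drop m (tseq t)) = n by rewrite size_drop size_tseq; lia.
  rewrite -{1}(cat_take_drop m (tseq t)) P_cat // => /andP [ok1 ok2].
  rewrite /join /= !seq_tupK ?cat_take_drop ?tseqK // => x /leq_sumn le_x.
    exact: leq_trans le_x (P2_sumn ok2).
  exact: leq_trans le_x (P1_sumn ok1).
rewrite (reindex_onto join cut cutK); apply: eq_big => [p | p _]; rewrite tseq_join //.
by rewrite joinK eqxx andbT P_cat ?size_tseq.
Qed.

End TupleSplit.

Lemma prefix_okDl dj m x j : prefix_ok dj (m + x) (m + j) = prefix_ok dj x j.
Proof. by case: dj; rewrite /prefix_ok ?ltn_add2l ?leq_add2l. Qed.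

Lemma Sd_seq_sumn d s : Sd_seq d s -> sumn s = (size d).+1.
Proof. by case/andP => /eqP. Qed.

Lemma Sd_seq_cat (a d : seq bool) (s1 s2 : seq nat) :
  size s1 = (size a).+1 -> sumn s1 = size s1 ->
  Sd_seq (a ++ false :: d) (s1 ++ s2) = Sd_seq a s1 && Sd_seq d s2.
Proof.
move=> sz_s1 sum_s1.
have split_iota : iota 1 (size (a ++ false :: d)) =
    iota 1 (size a) ++ (size a).+1 :: [seq (size a).+1 + j | j <- iota 1 (size d)].
  by rewrite size_cat iotaD -iotaDl addn1 add1n.
rewrite /Sd_seq split_iota all_cat /= all_map size_cat /= sumn_cat sum_s1 sz_s1.
have -> : prefix_ok (nth false (a ++ false :: d) (size a))
                    (sumn (take (size a).+1 (s1 ++ s2))) (size a).+1.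
  by rewrite nth_cat ltnn subnn -sz_s1 take_size_cat // sum_s1 /prefix_ok /=.
have -> : all (fun j => prefix_ok (nth false (a ++ false :: d) j.-1)
                          (sumn (take j (s1 ++ s2))) j) (iota 1 (size a)) =
          all (fun j => prefix_ok (nth false a j.-1) (sumn (take j s1)) j)
              (iota 1 (size a)).
  apply: eq_in_all => j; rewrite mem_iota add1n ltnS => /andP [j_gt0 le_ja].
  by rewrite nth_cat prednK // le_ja takel_cat // sz_s1 ltnW.
have -> : all (preim (addn (size a).+1)
                (fun j => prefix_ok (nth false (a ++ false :: d) j.-1)
                            (sumn (take j (s1 ++ s2))) j)) (iota 1 (size d)) =
          all (fun j => prefix_ok (nth false d j.-1) (sumn (take j s2)) j)
              (iota 1 (size d)).
  apply: eq_in_all => -[|j]; rewrite mem_iota // => _ /=.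
  rewrite nth_cat ltnNge leq_addr /= addKn.
  by rewrite take_cat sz_s1 ltnNge leq_addr /= addKn sumn_cat sum_s1 sz_s1 prefix_okDl.
by rewrite -addSn eqn_add2l eqxx /= andbCA.
Qed.

Lemma Sd_seq_prefix01 (a b : seq bool) s :
  Sd_seq (a ++ false :: true :: b) s -> sumn (take (size a).+1 s) = (size a).+1.
Proof.
case/andP => _ /allP ok_s.
have in_iota k : k <= 1 -> (size a).+1 + k \in iota 1 (size (a ++ false :: true :: b)).
  by rewrite mem_iota size_cat /=; lia.
have := ok_s _ (in_iota 0 isT); have := ok_s _ (in_iota 1 isT).
rewrite /prefix_ok !addn0 addn1 /= !nth_cat ltnn subnn ltnNge leqnSn /= subSnn /=.
have := @leq_sumn_take (size a).+1 (size a).+2 s (leqnSn _).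
by lia.
Qed.

Lemma Sd_seq_split (a b : seq bool) (s1 s2 : seq nat) :
  size s1 = (size a).+1 ->
  Sd_seq (a ++ false :: true :: b) (s1 ++ s2) = Sd_seq a s1 && Sd_seq (true :: b) s2.
Proof.
move=> sz_s1.
have [sum_s1 | sum_s1] := eqVneq (sumn s1) (size s1); first by rewrite Sd_seq_cat.
apply/idP/andP => [ok_s | [ok_s1 _]]; case/negP: sum_s1; apply/eqP.
  by have := Sd_seq_prefix01 ok_s; rewrite -sz_s1 take_size_cat.
by rewrite sz_s1 (Sd_seq_sumn ok_s1).
Qed.

Local Open Scope ring_scope.

Definition bern_weight (s : seq nat) : rat := \prod_(x <- s) (bern x / (x`!)%:R).

Lemma bern_weight_cat s1 s2 : bern_weight (s1 ++ s2) = bern_weight s1 * bern_weight s2.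
Proof. exact: big_cat. Qed.

Lemma CdE d : Cd d =
  (-1) ^+ (size d).+1 * \sum_(t : tup (size d).+1 | Sd_seq d (tseq t)) bern_weight (tseq t).
Proof.
rewrite /Cd /Ccoef; congr (_ * _).
by apply: eq_big => [t | t _]; [rewrite Sd_tseq | exact: prod_tup].
Qed.

Lemma Cd_cat01 (a b : seq bool) :
  Cd (a ++ false :: true :: b) = Cd a * Cd (true :: b).
Proof.
have size_d : ((size a).+1 + (size (true :: b)).+1 = (size (a ++ false :: true :: b)).+1)%N.
  by rewrite size_cat /= !addnS.
have sumn_le d s : Sd_seq d s -> (sumn s <= (size d).+1)%N.
  by move/Sd_seq_sumn ->.
rewrite !CdE mulrACA -exprD size_d; congr (_ * _).
have split_ok s1 s2 : size s1 = (size a).+1 -> size s2 = (size (true :: b)).+1 ->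
    Sd_seq (a ++ false :: true :: b) (s1 ++ s2) = Sd_seq a s1 && Sd_seq (true :: b) s2.
  by move=> sz_s1 _; apply: Sd_seq_split.
rewrite (sum_tup_cat _ size_d split_ok (@sumn_le a) (@sumn_le _)).
rewrite big_distrlr pair_big_dep /=.
by apply: eq_bigr => p _; rewrite bern_weight_cat.
Qed.

(* The hypotheses only tie r and l to the sizes of a and b: the identity
   holds for all a and b. *)
Theorem theorem2p3 (r l : nat) (a b : seq bool) :
  (3 <= r)%N -> (0 < l)%N -> (l < r - 1)%N ->
  size a = (l - 1)%N -> size b = (r - l - 2)%N ->
  Cd (a ++ false :: true :: b) = Cd a * Cd (true :: b).
Proof. by move=> *; apply: Cd_cat01. Qed.
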